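(* Let $\pi=(\pi_n^{n+1}\colon(X_{n+1},f_{n+1})\to(X_n,f_n))_{n\ge1}$ be an inverse sequence of equivariant maps satisfying MLC(1), and suppose $(X_n,f_n)$ is a subshift of finite type for each $n\ge1$. Let $Y_n=CR(f_n)$, $g_n=f_n|_{Y_n}$, and $\tilde\pi_n^{n+1}=\pi_n^{n+1}|_{Y_{n+1}}\colon Y_{n+1}\to Y_n$. Then the inverse sequence $\tilde\pi=(\tilde\pi_n^{n+1}\colon(Y_{n+1},g_{n+1})\to(Y_n,g_n))_{n\ge1}$ satisfies MLC(1).
   Context: Equivariant means $\pi_n^{n+1}$ is continuous with $f_n\circ\pi_n^{n+1}=\pi_n^{n+1}\circ f_{n+1}$. For $m\ge n$, $\pi_n^m=\pi_n^{n+1}\circ\cdots\circ\pi_{m-1}^m$. An inverse sequence $(p_n\colon Z_{n+1}\to Z_n)$ satisfies MLC(1) if $p_n(Z_{n+1})=p_n(p_{n+1}(Z_{n+2}))$ for every $n$. A subshift of finite type is a system $(Z,\sigma|_Z)$ where $S$ is a finite discrete set, $\sigma\colon S^{\mathbb N}\to S^{\mathbb N}$, $\sigma((x_i)_{i\ge1})=(x_{i+1})_{i\ge1}$, is the shift on the product space, and there are $N>0$ and $F\subset S^{N+1}$ with $Z=\{x\in S^{\mathbb N}:(x_i,\dots,x_{i+N})\in F\ \forall i\ge1\}$. For a continuous map $g$ of a compact metric space $(Y,d)$, $CR(g)$ is the set of $y$ such that for every $\delta>0$ there is a finite sequence $y=y_0,y_1,\dots,y_k=y$, $k>0$, with $d(g(y_i),y_{i+1})\le\delta$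 for all $i<k$. *)

From mathcomp Require Import all_boot.
Set Implicit Arguments. Unset Strict Implicit. Unset Printing Implicit Defensive.

(* One-sided sequences S^N, indexed from 0 (the paper indexes from 1). *)
Definition shift {S : Type} (x : nat -> S) : nat -> S := fun i => x i.+1.

(* x and y agree on the first k coordinates, i.e. d(x,y) <= 2^-k for the
   standard metric d(x,y) = 2^-(min{i | x i <> y i}) on S^N. *)
Definition agree {S : Type} (k : nat) (x y : nat -> S) : Prop :=
  forall i, i < k -> x i = y i.

Definition SFT (S : finType) (Z : (nat -> S) -> Prop) : Prop :=
  exists (N : nat) (F : pred (seq S)), 0 < N /\
    forall x, Z x <-> (forall i, F [seq x (i + j) | j <- iota 0 N.+1]).

(* p is continuous on Z (product topology of discrete spaces, i.e. w.r.t.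
   the metric above). *)
Definition cont_on {S T : Type} (Z : (nat -> S) -> Prop)
  (p : (nat -> S) -> (nat -> T)) : Prop :=
  forall x, Z x -> forall k, exists m, forall y, Z y -> agree m x y ->
    agree k (p x) (p y).

(* Chain recurrent set CR(sigma|_Z): y \in Z such that for every delta > 0
   (delta = 2^-k) there is a delta-chain y = y_0, ..., y_m = y with m > 0
   in Z and d(sigma(y_i), y_{i+1}) <= delta. *)
Definition CR {S : Type} (Z : (nat -> S) -> Prop) (y : nat -> S) : Prop :=
  Z y /\ forall k, exists (m : nat) (c : nat -> (nat -> S)),
    [/\ 0 < m, c 0 = y, c m = y,
        (forall i, i <= m -> Z (c i)) &
        (forall i, i < m -> agree k (shift (c i)) (c i.+1))].

Definition img {A B : Type} (p : A -> B) (Z : A -> Prop) : B -> Prop :=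
  fun b => exists a, Z a /\ p a = b.

Definition set_eq {A : Type} (P Q : A -> Prop) : Prop := forall a, P a <-> Q a.

Definition MLC1 (S : nat -> Type) (Z : forall n, (nat -> S n) -> Prop)
  (p : forall n, (nat -> S n.+1) -> (nat -> S n)) : Prop :=
  forall n, set_eq (img (p n) (Z n.+1)) (img (p n) (img (p n.+1) (Z n.+2))).

(* Chain recurrent points of a subshift of finite type are limits of periodic
   points, and continuous equivariant maps send periodic points to periodic
   points; as CR is closed, pi_{n+1} maps CR(f_{n+2}) into CR(f_{n+1}).
   Conversely, approximate y in CR(f_{n+1}) by a periodic point x of period m.
   By MLC(1), pi_n x = pi_n (pi_{n+1} w) for some w in X_{n+2}, and then every
   iterate sigma^{mj} w has the same image.  A cluster point of these iterates
   lies in the omega-limit set of w, hence in CR(f_{n+2}), and maps to pi_n x.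
   Letting x tend to y and taking a cluster point once more yields a point of
   CR(f_{n+2}) mapping to pi_n y. *)
From Stdlib Require Import Classical ClassicalEpsilon FunctionalExtensionality.
From mathcomp Require Import all_boot.
Set Implicit Arguments. Unset Strict Implicit.

Definition shiftn {S : Type} (j : nat) (x : nat -> S) : nat -> S :=
  fun i => x (j + i).

Definition shift_invariant {S : Type} (Z : (nat -> S) -> Prop) : Prop :=
  forall x, Z x -> Z (shift x).

Definition equivariant_on {S T : Type} (Z : (nat -> S) -> Prop)
  (p : (nat -> S) -> (nat -> T)) : Prop :=
  forall x, Z x -> p (shift x) = shift (p x).

Definition infinitely_often (P : nat -> Prop) : Prop :=
  forall J, exists2 j, J <= j & P j.

Definition cluster_point {S : Type} (s : nat -> nat -> S) (z : nat -> S) : Prop :=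
  forall K, infinitely_often (fun j => agree K (s j) z).

Section Agree.
Variables (S : Type) (k : nat).
Implicit Types x y z : nat -> S.

Lemma agree_sym x y : agree k x y -> agree k y x.
Proof. by move=> xy i ik; rewrite xy. Qed.

Lemma agree_trans x y z : agree k x y -> agree k y z -> agree k x z.
Proof. by move=> xy yz i ik; rewrite xy ?yz. Qed.

Lemma agree_leq k' x y : k' <= k -> agree k x y -> agree k' x y.
Proof. by move=> k'k xy i ik'; apply: xy; apply: leq_trans k'k. Qed.

Lemma agree_shift x y : agree k.+1 x y -> agree k (shift x) (shift y).
Proof. by move=> xy i ik; apply: xy. Qed.

End Agree.

Section Shifts.
Variable S : Type.
Implicit Types x : nat -> S.

Lemma shiftn0 x : shiftn 0 x = x.
Proof. by apply: functional_extensionality => i; rewrite /shiftn add0n. Qed.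

Lemma shiftnS j x : shiftn j.+1 x = shift (shiftn j x).
Proof. by apply: functional_extensionality => i; rewrite /shiftn /shift addnS. Qed.

Lemma shiftnD i j x : shiftn (i + j) x = shiftn j (shiftn i x).
Proof. by apply: functional_extensionality => l; rewrite /shiftn addnA. Qed.

Lemma periodic_shiftnM m x : shiftn m x = x -> forall j, shiftn (m * j) x = x.
Proof. by move=> per; elim=> [|j IH]; rewrite ?muln0 ?shiftn0 // mulnSr shiftnD IH per. Qed.

Lemma shiftn_invariant (Z : (nat -> S) -> Prop) :
  shift_invariant Z -> forall j x, Z x -> Z (shiftn j x).
Proof. by move=> hZ; elim=> [|j IH] x Zx; rewrite ?shiftn0 // shiftnS; apply/hZ/IH. Qed.

End Shifts.

Lemma equivariant_shiftn (S T : Type) (Z : (nat -> S) -> Prop) (p : (nat -> S) -> nat -> T) :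
  shift_invariant Z -> equivariant_on Z p ->
  forall j x, Z x -> p (shiftn j x) = shiftn j (p x).
Proof.
move=> hZ hp; elim=> [|j IH] x Zx; first by rewrite !shiftn0.
by rewrite !shiftnS hp ?IH //; apply: shiftn_invariant.
Qed.

Lemma cont_on_comp (A B C : Type) (X : (nat -> A) -> Prop) (Y : (nat -> B) -> Prop)
  (p : (nat -> A) -> nat -> B) (q : (nat -> B) -> nat -> C) :
  cont_on X p -> (forall x, X x -> Y (p x)) -> cont_on Y q ->
  cont_on X (fun x => q (p x)).
Proof.
move=> hp XY hq x Xx k.
have [m1 Hm1] := hq _ (XY _ Xx) k.
have [m2 Hm2] := hp x Xx m1.
by exists m2 => y Xy xy; apply: Hm1; [exact: XY | exact: Hm2].
Qed.

Lemma equivariant_on_comp (A B C : Type) (X : (nat -> A) -> Prop) (Y : (nat -> B) -> Prop)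
  (p : (nat -> A) -> nat -> B) (q : (nat -> B) -> nat -> C) :
  equivariant_on X p -> (forall x, X x -> Y (p x)) -> equivariant_on Y q ->
  equivariant_on X (fun x => q (p x)).
Proof. by move=> hp XY hq x Xx; rewrite hp // hq //; apply: XY. Qed.

Section Compactness.
Variables (S : finType) (s : nat -> nat -> S).

Lemma pigeonhole_infinitely_often (f : nat -> S) (P : nat -> Prop) :
  infinitely_often P -> exists a, infinitely_often (fun j => P j /\ f j = a).
Proof.
move=> ioP; apply: NNPP => none.
have bound a : exists J, forall j, J <= j -> P j -> f j <> a.
  apply: NNPP => unbounded; apply: none; exists a => J.
  apply: NNPP => nj; apply: unbounded; exists J => j Jj Pj fj.
  by apply: nj; exists j.
have [J HJ] := choice _ bound.
have [j jJ Pj] := ioP (\max_a J a).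
exact: HJ (f j) j (leq_trans (leq_bigmax (f j)) jJ) Pj erefl.
Qed.

Let value_for (P : nat -> Prop) (K : nat) : S :=
  epsilon (inhabits (s 0 0)) (fun a => infinitely_often (fun j => P j /\ s j K = a)).

(* Koenig's lemma: [prefix_set K] is an infinite set of indices along which
   all [s j] have the same first [K] coordinates. *)
Fixpoint prefix_set (K : nat) : nat -> Prop :=
  if K is K'.+1 then fun j => prefix_set K' j /\ s j K' = value_for (prefix_set K') K'
  else fun _ => True.

Lemma cluster_point_exists : exists z, cluster_point s z.
Proof.
pose z K := value_for (prefix_set K) K.
have io K : infinitely_often (prefix_set K).
  elim: K => [|K IH]; first by move=> J; exists J.
  exact: (epsilon_spec (inhabits (s 0 0)) _ (pigeonhole_infinitely_often (s^~ K) IH)).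
have prefix K j : prefix_set K j -> agree K (s j) z.
  elim: K => [_ i //|K IH [Pj sjK] i].
  by rewrite ltnS leq_eqVlt => /orP [/eqP -> //|]; apply: IH.
exists z => K J; have [j Jj Pj] := io K J.
by exists j => //; apply: prefix.
Qed.

End Compactness.

Lemma cluster_point_subseq (S : Type) (s : nat -> nat -> S) (t : nat -> nat) z :
  (forall j, j <= t j) -> cluster_point (fun j => s (t j)) z -> cluster_point s z.
Proof.
move=> tj cz K J; have [j Jj sz] := cz K J.
by exists (t j) => //; apply: leq_trans (tj j).
Qed.

Lemma cont_on_cluster_point (S T : Type) (Z : (nat -> S) -> Prop)
  (q : (nat -> S) -> nat -> T) (s : nat -> nat -> S) z a :
  cont_on Z q -> Z z -> (forall j, Z (s j)) -> cluster_point s z ->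
  (forall j, agree j (q (s j)) a) -> q z = a.
Proof.
move=> hq Zz Zs cz qs; apply: functional_extensionality => i.
have [M HM] := hq z Zz i.+1.
have [j ij sz] := cz M i.+1.
by rewrite (HM _ (Zs j) (agree_sym sz) i (ltnSn i)); apply: qs.
Qed.

Section SubshiftsOfFiniteType.
Variables (S : finType) (Z : (nat -> S) -> Prop).
Hypothesis sftZ : SFT Z.

Lemma SFT_shift_invariant : shift_invariant Z.
Proof.
case: sftZ => [N [F [_ HZ]]] x /HZ Zx; apply/HZ => i.
suff -> : [seq shift x (i + j) | j <- iota 0 N.+1] = [seq x (i.+1 + j) | j <- iota 0 N.+1].
  exact: Zx.
by apply: eq_map => j; rewrite /shift addSn.
Qed.

Lemma SFT_window : exists N, forall x,
  (forall i, exists2 z, Z z & agree N (shiftn i x) z) -> Z x.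
Proof.
case: sftZ => [N [F [_ HZ]]]; exists N.+1 => x near; apply/HZ => i.
have [z /HZ /(_ 0) Fz xz] := near i.
suff -> : [seq x (i + j) | j <- iota 0 N.+1] = [seq z (0 + j) | j <- iota 0 N.+1].
  exact: Fz.
by apply/eq_in_map => j; rewrite mem_iota add0n => /andP [_]; apply: xz.
Qed.

Lemma SFT_cluster_point (s : nat -> nat -> S) z :
  (forall j, Z (s j)) -> cluster_point s z -> Z z.
Proof.
move=> Zs cz; have [N HN] := SFT_window; apply: HN => i.
have [j _ sz] := cz (i + N) 0.
exists (shiftn i (s j)); first exact: (shiftn_invariant (@SFT_shift_invariant) i (Zs j)).
by move=> l lN; rewrite /shiftn sz // ltn_add2l.
Qed.

End SubshiftsOfFiniteType.

Section ChainRecurrence.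
Variables (S : Type) (Z : (nat -> S) -> Prop).

Lemma chain_coords k (d : nat -> nat -> S) :
  (forall i, agree k (shift (d i)) (d i.+1)) ->
  forall j i l, j + l <= k -> d (i + j) l = d i (j + l).
Proof.
move=> hd; elim=> [|j IH] i l jl; first by rewrite addn0.
have jlk : j + l < k by rewrite -addSn.
rewrite -addSnnS IH; last exact: ltnW.
by rewrite -(hd i _ jlk) /shift addSn.
Qed.

Lemma CR_of_near_loops y : Z y ->
  (forall k, exists m (c : nat -> nat -> S),
     [/\ 0 < m, agree k.+1 (c 0) y, agree k.+1 (c m) y,
         forall i, i <= m -> Z (c i) &
         forall i, i < m -> agree k (shift (c i)) (c i.+1)]) ->
  CR Z y.
Proof.
move=> Zy loops; split=> // k.
have [m [c [m0 c0y cmy Zc hc]]] := loops k.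
(* Endpoints at precision [k.+1] stay [k]-close after one shift. *)
pose c' i := if (i == 0) || (i == m) then y else c i.
have c'c i : agree k.+1 (c' i) (c i).
  by rewrite /c'; case: ifP => [/orP [] /eqP -> | _ l _] //; apply: agree_sym.
exists m, c'; split => //; first by rewrite /c' eqxx orbT.
  by move=> i im; rewrite /c'; case: ifP => // _; apply: Zc.
move=> i im; apply: agree_trans (agree_shift (c'c i)) _.
apply: agree_trans (hc i im) _.
exact/agree_leq/agree_sym/c'c.
Qed.

Lemma CR_closed y : Z y -> (forall K, exists2 w, CR Z w & agree K w y) -> CR Z y.
Proof.
move=> Zy near; apply: CR_of_near_loops => // k.
have [w [_ loops] wy] := near k.+1.
have [m [c [m0 c0 cm Zc hc]]] := loops k.
by exists m, c; rewrite c0 cm.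
Qed.

Hypothesis invZ : shift_invariant Z.

Lemma omega_limit_CR w z :
  Z w -> Z z -> cluster_point (fun t => shiftn t w) z -> CR Z z.
Proof.
move=> Zw Zz cz; apply: CR_of_near_loops => // k.
have [t1 _ w1z] := cz k.+1 0.
have [t2 t12 w2z] := cz k.+1 t1.+1.
exists (t2 - t1), (fun i => shiftn (t1 + i) w); split.
- by rewrite subn_gt0.
- by rewrite addn0.
- by rewrite subnKC // ltnW.
- by move=> i _; apply: shiftn_invariant.
- by move=> i _; rewrite addnS shiftnS.
Qed.

Lemma periodic_CR m x : Z x -> 0 < m -> shiftn m x = x -> CR Z x.
Proof.
move=> Zx m0 per; apply: (omega_limit_CR Zx Zx) => K J.
by exists (m * J); [exact: leq_pmull | rewrite periodic_shiftnM].
Qed.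

End ChainRecurrence.

Lemma CR_periodic_approx (S : finType) (Z : (nat -> S) -> Prop) y :
  SFT Z -> CR Z y -> forall K,
  exists x m, [/\ Z x, 0 < m, shiftn m x = x & agree K x y].
Proof.
move=> /SFT_window [N HN] [_ chains] K.
have [m [c [m0 c0 cm Zc hc]]] := chains (K + N).
pose d i := c (i %% m).
have dS i : d i.+1 = c (i %% m).+1.
  rewrite /d -addn1 -modnDml addn1.
  case: (ltngtP (i %% m).+1 m) => [lt|gt|->]; first by rewrite modn_small.
  - by move: gt; rewrite ltnS leqNgt ltn_pmod.
  - by rewrite modnn c0 cm.
have hd i : agree (K + N) (shift (d i)) (d i.+1).
  by rewrite dS; apply/hc/ltn_pmod.
have coords := chain_coords hd.
exists (fun i => d i 0), m; split => //.
- apply: HN => i; exists (d i); first exact/Zc/ltnW/ltn_pmod.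
  move=> j jN; rewrite /shiftn coords ?addn0 //.
  exact: leq_trans (ltnW jN) (leq_addl _ _).
- by apply: functional_extensionality => i; rewrite /shiftn /d modnDl.
- move=> j jK; rewrite -(add0n j) coords ?addn0 /d ?mod0n ?c0 //.
  exact: leq_trans (ltnW jK) (leq_addr _ _).
Qed.

Lemma CR_image (S T : finType) (X : (nat -> S) -> Prop) (Y : (nat -> T) -> Prop)
  (p : (nat -> S) -> nat -> T) :
  SFT X -> shift_invariant Y -> (forall x, X x -> Y (p x)) ->
  cont_on X p -> equivariant_on X p -> forall z, CR X z -> CR Y (p z).
Proof.
move=> sftX invY XY hp equip z CRz; apply: CR_closed; first exact/XY/CRz.1.
move=> K; have [M HM] := hp z CRz.1 K.
have [x [m [Xx m0 per xz]]] := CR_periodic_approx sftX CRz M.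
exists (p x); last exact/agree_sym/HM/agree_sym.
apply: (periodic_CR invY (XY _ Xx) m0).
by rewrite -(equivariant_shiftn (SFT_shift_invariant sftX)) ?per.
Qed.

Section CRImage.
Variables (S S' T : finType) (X : (nat -> S) -> Prop) (X' : (nat -> S') -> Prop).
Variables (p : (nat -> S) -> nat -> T) (q : (nat -> S') -> nat -> T).
Hypotheses (sftX : SFT X) (sftX' : SFT X').
Hypotheses (p_cont : cont_on X p) (p_equi : equivariant_on X p).
Hypotheses (q_cont : cont_on X' q) (q_equi : equivariant_on X' q).
Hypothesis img_sub : forall x, X x -> exists2 w, X' w & q w = p x.

Lemma CR_img_approx y : CR X y -> forall k, exists z, CR X' z /\ agree k (q z) (p y).
Proof.
move=> CRy k; have [M HM] := p_cont CRy.1 k.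
have [x [m [Xx m0 per xy]]] := CR_periodic_approx sftX CRy M.
have [w X'w qw] := img_sub Xx.
pose s j := shiftn (m * j) w.
have X's j : X' (s j) := shiftn_invariant (SFT_shift_invariant sftX') _ X'w.
have qs j : q (s j) = p x.
  rewrite (equivariant_shiftn (SFT_shift_invariant sftX') q_equi _ X'w) qw.
  by rewrite -(equivariant_shiftn (SFT_shift_invariant sftX) p_equi _ Xx) periodic_shiftnM.
have [z cz] := cluster_point_exists s.
have X'z := SFT_cluster_point sftX' X's cz.
exists z; split.
  apply: (omega_limit_CR (SFT_shift_invariant sftX') X'w X'z).
  exact: (cluster_point_subseq (s := shiftn^~ w) (t := muln m) (fun j => leq_pmull j m0) cz).
rewrite (cont_on_cluster_point (a := p x) q_cont X'z X's cz); last by move=> j i _; rewrite qs.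
exact: agree_sym (HM x Xx (agree_sym xy)).
Qed.

Lemma img_CR_sub a : img p (CR X) a -> img q (CR X') a.
Proof.
case=> y [CRy <-].
have [zs CRzs] := choice _ (CR_img_approx CRy).
have [z cz] := cluster_point_exists zs.
have X'zs j : X' (zs j) by case: (CRzs j) => [[]].
have X'z := SFT_cluster_point sftX' X'zs cz.
exists z; split; last exact: cont_on_cluster_point q_cont X'z X'zs cz (fun j => (CRzs j).2).
apply: CR_closed => // K; have [j _ zsz] := cz K 0.
by exists (zs j); first exact: (CRzs j).1.
Qed.

End CRImage.

Theorem lemma4p2 (S : nat -> finType) (X : forall n, (nat -> S n) -> Prop)
  (pi : forall n, (nat -> S n.+1) -> (nat -> S n))
  (hX : forall n, SFT (X n))
  (hmap : forall n x, X n.+1 x -> X n (pi n x))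
  (hcont : forall n, cont_on (X n.+1) (pi n))
  (hequi : forall n x, X n.+1 x -> pi n (shift x) = shift (pi n x))
  (hmlc : MLC1 X pi) :
  MLC1 (fun n => CR (X n)) pi.
Proof.
move=> n a; split.
- have q_cont := cont_on_comp (hcont n.+1) (hmap n.+1) (hcont n).
  have q_equi := equivariant_on_comp (hequi n.+1) (hmap n.+1) (hequi n).
  have img_sub x : X n.+1 x -> exists2 w, X n.+2 w & pi n (pi n.+1 w) = pi n x.
    move=> Xx; have [_ [[w [Xw <-]] e]] := (hmlc n (pi n x)).1 (ex_intro _ x (conj Xx erefl)).
    by exists w.
  case/(img_CR_sub (hX n.+1) (hX n.+2) (hcont n) (hequi n) q_cont q_equi img_sub).
  by move=> z [CRz <-]; exists (pi n.+1 z); split => //; exists z.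
- case=> _ [[z [CRz <-]] <-]; exists (pi n.+1 z); split => //.
  exact: CR_image (hX n.+2) (SFT_shift_invariant (hX n.+1)) (hmap n.+1) (hcont n.+1)
    (hequi n.+1) _ CRz.
Qed.
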